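(* Let $S$ be a closed type of system $\mathcal F$ not containing the type constant $O$. Then $S$ is an output type if and only if: for every normal $\lambda$-term $t$ and all types $A_1,\dots,A_r$ that end with $O$, if $x_1:A_1,\dots,x_r:A_r\vdash_{\mathcal F} t : S$, then $x_i\notin Fv(t)$ for all $1\le i\le r$.
   Context: $\lambda$-terms are those of the untyped $\lambda$-calculus; $Fv(t)$ the free variables; normal means without $\beta$-redex. Types of system $\mathcal F$ are built from type variables and type constants (atomic, not quantifiable; $O$ is one) with $\rightarrow$ and $\forall$; only proper types (in every $\forall XA$, $X$ occurs free in $A$). Typing: (ax) $\Gamma \vdash x_i : A_i$ for $x_i:A_i\in\Gamma$; ($\rightarrow_i$) from $\Gamma, x:B \vdash t : C$ infer $\Gamma \vdash \lambda x t : B \rightarrow C$; ($\rightarrow_e$) from $\Gamma \vdash u : B\rightarrow C$, $\Gamma \vdash v : B$ infer $\Gamma \vdash (u)v : C$; ($\forall_i$) from $\Gamma \vdash t : A$, $X$ not free in $\Gamma$, infer $\Gamma \vdash t : \forall X A$; ($\forall_e$) from $\Gamma \vdash t : \forall X A$ infer $\Gamma \vdash t : A[C/X]$. An output type is a closed type $S$ not containing $O$ such that for every normal $t$ and variable $\alpha$, $\alpha:O\vdash_{\mathcal F}t:S$ implies $\alpha\notin Fv(t)$. For $K$ a type variable or constant, ''$A$ ends with $K$'' is defined inductively: $K$ ends with $K$; if $A$ ends with $K$ then $B\rightarrow A$ ends with $K$ for every type $B$; if $A$ ends with $K$ then $\forall X A$ ends with $K$ for every type variable $X\neq K$. *)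

From Stdlib Require Import Arith List.
Import ListNotations.

Inductive term : Type :=
| Var : nat -> term
| Lam : nat -> term -> term
| App : term -> term -> term.

Fixpoint free_in (x : nat) (t : term) : Prop :=
  match t with
  | Var y => x = y
  | Lam y u => x <> y /\ free_in x u
  | App u v => free_in x u \/ free_in x v
  end.

Fixpoint normal (t : term) : Prop :=
  match t with
  | Var _ => True
  | Lam _ u => normal u
  | App u v =>
      match u with Lam _ _ => False | _ => True end /\ normal u /\ normal v
  end.

Inductive ty : Type :=
| TVar : nat -> ty
| TConst : nat -> ty
| Arrow : ty -> ty -> ty
| Forall : ty -> ty.

Definition O : ty := TConst 0.

Fixpoint occurs (n : nat) (A : ty) : Prop :=
  match A with
  | TVar m => n = m
  | TConst _ => False
  | Arrow B C => occurs n B \/ occurs n C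
  | Forall B => occurs (S n) B
  end.

Fixpoint proper (A : ty) : Prop :=
  match A with
  | TVar _ | TConst _ => True
  | Arrow B C => proper B /\ proper C
  | Forall B => occurs 0 B /\ proper B
  end.

Definition closed_ty (A : ty) : Prop := forall n, ~ occurs n A.

Fixpoint contains_const (k : nat) (A : ty) : Prop :=
  match A with
  | TVar _ => False
  | TConst k' => k = k'
  | Arrow B C => contains_const k B \/ contains_const k C
  | Forall B => contains_const k B
  end.

Definition contains_O (A : ty) : Prop := contains_const 0 A.

Fixpoint lift (c : nat) (A : ty) : ty :=
  match A with
  | TVar n => if n <? c then TVar n else TVar (S n)
  | TConst k => TConst k
  | Arrow B C => Arrow (lift c B) (lift c C)
  | Forall B => Forall (lift (S c) B)
  end.

(** subst k C A = A[C/k], removing variable k (indices above k decremented) *)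
Fixpoint subst (k : nat) (C : ty) (A : ty) : ty :=
  match A with
  | TVar n => if n <? k then TVar n else if n =? k then C else TVar (pred n)
  | TConst c => TConst c
  | Arrow B D => Arrow (subst k C B) (subst k C D)
  | Forall B => Forall (subst (S k) (lift 0 C) B)
  end.

Inductive ends_with_const (k : nat) : ty -> Prop :=
| EW_base : ends_with_const k (TConst k)
| EW_arrow : forall B A, ends_with_const k A -> ends_with_const k (Arrow B A)
| EW_forall : forall A, ends_with_const k A -> ends_with_const k (Forall A).

Definition ends_with_O (A : ty) : Prop := ends_with_const 0 A.

Definition ctx := list (nat * ty).

Fixpoint lookup (x : nat) (G : ctx) : option ty :=
  match G with
  | [] => None
  | (y, A) :: G' => if x =? y then Some A else lookup x G'
  end.

Definition lift_ctx (G : ctx) : ctx := map (fun p => (fst p, lift 0 (snd p))) G.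

(** Typing in system F (only proper types). The rule forall_i is in de Bruijn
    form: the condition "X not free in Gamma" is realised by lifting Gamma. *)
Inductive typ : ctx -> term -> ty -> Prop :=
| T_ax : forall G x A, lookup x G = Some A -> typ G (Var x) A
| T_abs : forall G x B t C,
    proper B -> typ ((x, B) :: G) t C -> typ G (Lam x t) (Arrow B C)
| T_app : forall G u v B C,
    typ G u (Arrow B C) -> typ G v B -> typ G (App u v) C
| T_gen : forall G t A,
    occurs 0 A -> typ (lift_ctx G) t A -> typ G t (Forall A)
| T_inst : forall G t A C,
    proper C -> typ G t (Forall A) -> typ G t (subst 0 C A).

Definition output_type (S : ty) : Prop :=
  closed_ty S /\ proper S /\ ~ contains_O S /\
  forall (t : term) (alpha : nat),
    normal t -> typ [(alpha, O)] t S -> ~ free_in alpha t.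

(* Suppose some [x_i] is free in [t].  Pick a variable [a] occurring nowhere in
   [t] and replace every maximal subterm of [t] whose head variable is one of
   the [x_i] by the term [λ z_1 ... z_k. a] of the same type.  This is possible
   because "ends with O" is stable under arrow elimination and under forall
   introduction and elimination, so an application headed by some [x_i] has a
   type ending with [O], and every such type is inhabited by [λ z_1 ... z_k. a]
   in the context [a : O].  The resulting term is normal, has type [S] in the
   context [a : O] alone, and has [a] free because [x_i] was, contradicting
   that [S] is an output type.  The converse is the case of a single variable
   of type [O]. *)

From Stdlib Require Import List Arith Lia.
From Pilot Require Import Defs.
Import ListNotations.

Lemma lookup_lift_ctx x G :
  lookup x (lift_ctx G) = option_map (lift 0) (lookup x G).
Proof.
  induction G as [|[y A] G IH]; simpl; [reflexivity|].
  destruct (x =? y); auto.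
Qed.

Lemma ends_with_const_lift k c A :
  ends_with_const k A -> ends_with_const k (lift c A).
Proof. intros H; revert c; induction H; intros c; simpl; constructor; auto. Qed.

Lemma ends_with_const_subst k n C A :
  ends_with_const k A -> ends_with_const k (subst n C A).
Proof. intros H; revert n C; induction H; intros n C; simpl; constructor; auto. Qed.

Lemma occurs_lift A i c : occurs i A -> i < c -> occurs i (lift c A).
Proof.
  revert i c; induction A as [m| |B IHB D IHD|B IHB]; simpl; intros i c Hocc Hlt.
  - subst m. destruct (i <? c) eqn:E; [reflexivity|].
    apply Nat.ltb_ge in E; lia.
  - contradiction.
  - destruct Hocc; [left|right]; auto.
  - apply IHB; [assumption|lia].
Qed.

Lemma proper_lift A c : proper A -> proper (lift c A).
Proof.
  revert c; induction A as [m| |B IHB D IHD|B IHB]; simpl; intros c HA.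
  - destruct (m <? c); exact I.
  - exact I.
  - destruct HA; split; auto.
  - destruct HA; split; [apply occurs_lift; [assumption|lia]|auto].
Qed.

Lemma occurs_subst A i k C : occurs i A -> i < k -> occurs i (subst k C A).
Proof.
  revert i k C; induction A as [m| |B IHB D IHD|B IHB]; simpl; intros i k C Hocc Hlt.
  - subst m. destruct (i <? k) eqn:E; [reflexivity|].
    apply Nat.ltb_ge in E; lia.
  - contradiction.
  - destruct Hocc; [left|right]; auto.
  - apply IHB; [assumption|lia].
Qed.

Lemma proper_subst A k C : proper A -> proper C -> proper (subst k C A).
Proof.
  revert k C; induction A as [m| |B IHB D IHD|B IHB]; simpl; intros k C HA HC.
  - destruct (m <? k); [exact I|]. destruct (m =? k); [assumption|exact I].
  - exact I.
  - destruct HA; split; auto.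
  - destruct HA; split.
    + apply occurs_subst; [assumption|lia].
    + apply IHB; [assumption|apply proper_lift; assumption].
Qed.

Fixpoint head_var (t : term) : option nat :=
  match t with
  | Var y => Some y
  | Lam _ _ => None
  | App u _ => head_var u
  end.

Lemma typ_head_var_bound G t T y :
  typ G t T -> head_var t = Some y -> lookup y G <> None.
Proof.
  intros Ht; revert y.
  induction Ht as [G x B Hx | | G u v B C Hu IHu _ _ | G t B Hocc _ IH | G t B C HC _ IH];
    simpl; intros y Hy.
  - injection Hy as <-. congruence.
  - discriminate.
  - exact (IHu y Hy).
  - intros Hl. apply (IH y Hy). rewrite lookup_lift_ctx, Hl. reflexivity.
  - exact (IH y Hy).
Qed.

Lemma typ_head_var_ends_with_const k G t T y A :
  typ G t T -> head_var t = Some y -> lookup y G = Some A ->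
  proper A -> ends_with_const k A -> proper T /\ ends_with_const k T.
Proof.
  intros Ht; revert y A.
  induction Ht as [G x B Hx | | G u v B C Hu IHu _ _ | G t B Hocc _ IH
                  | G t B C HC _ IH]; simpl; intros y A Hy HyA HA HkA.
  - injection Hy as <-. rewrite Hx in HyA. injection HyA as ->. auto.
  - discriminate.
  - destruct (IHu y A Hy HyA HA HkA) as [[_ HpC] HkBC].
    inversion HkBC; subst; auto.
  - assert (HyA' : lookup y (lift_ctx G) = Some (lift 0 A))
      by (rewrite lookup_lift_ctx, HyA; reflexivity).
    destruct (IH y _ Hy HyA' (proper_lift A 0 HA) (ends_with_const_lift k 0 A HkA)).
    split; [split|constructor]; assumption.
  - destruct (IH y A Hy HyA HA HkA) as [[_ HpB] HkB].
    inversion HkB; subst.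
    split; [apply proper_subst|apply ends_with_const_subst]; assumption.
Qed.

(* [stub a (B_1 -> ... -> B_k -> K)] is [λ z_1 ... z_k. a], the binders all
   named [S a] so that they never capture [a]. *)
Fixpoint stub (a : nat) (T : ty) : term :=
  match T with
  | Arrow _ C => Lam (S a) (stub a C)
  | Defs.Forall A => stub a A
  | _ => Var a
  end.

Lemma stub_normal a T : normal (stub a T).
Proof. induction T; simpl; auto. Qed.

Lemma free_in_stub a T : free_in a (stub a T).
Proof. induction T; simpl; auto. Qed.

Lemma typ_stub k a G T :
  ends_with_const k T -> proper T -> lookup a G = Some (TConst k) ->
  typ G (stub a T) T.
Proof.
  intros HkT; revert G; induction HkT as [|B A _ IH|A _ IH]; simpl; intros G HpT Ha.
  - constructor; assumption.
  - destruct HpT as [HpB HpA]. constructor; [assumption|].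
    apply IH; [assumption|]. simpl.
    replace (a =? S a) with false by (symmetry; apply Nat.eqb_neq; lia).
    assumption.
  - destruct HpT as [Hocc HpA]. constructor; [assumption|].
    apply IH; [assumption|]. rewrite lookup_lift_ctx, Ha. reflexivity.
Qed.

Definition is_lam (t : term) : Prop :=
  match t with Lam _ _ => True | _ => False end.

Lemma normal_app u v : normal (App u v) <-> ~ is_lam u /\ normal u /\ normal v.
Proof. destruct u; simpl; tauto. Qed.

Fixpoint absent (a : nat) (t : term) : Prop :=
  match t with
  | Var y => y <> a
  | Lam x u => x <> a /\ absent a u
  | App u v => absent a u /\ absent a v
  end.

Section Translation.

Variables k a : nat.

(* [G'] is [G] with [a : K] added and some variables whose types end with [K]
   removed; the subterms headed by removed variables are those replaced by
   stubs. *)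
Definition erases (G G' : ctx) : Prop :=
  lookup a G' = Some (TConst k) /\
  forall y, y <> a ->
    lookup y G' = lookup y G \/
    (lookup y G' = None /\
     exists A, lookup y G = Some A /\ proper A /\ ends_with_const k A).

Lemma erases_lift_ctx G G' : erases G G' -> erases (lift_ctx G) (lift_ctx G').
Proof.
  intros [Ha HG]. split; [rewrite lookup_lift_ctx, Ha; reflexivity|].
  intros y Hy. rewrite !lookup_lift_ctx.
  destruct (HG y Hy) as [-> | [-> [A (-> & HpA & HkA)]]]; [left; reflexivity|].
  right. split; [reflexivity|].
  exists (lift 0 A). auto using proper_lift, ends_with_const_lift.
Qed.

Lemma erases_cons G G' x B : x <> a -> erases G G' -> erases ((x, B) :: G) ((x, B) :: G').
Proof.
  intros Hx [Ha HG]. split.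
  - simpl. replace (a =? x) with false by (symmetry; apply Nat.eqb_neq; auto).
    assumption.
  - intros y Hy. simpl. destruct (y =? x); auto.
Qed.

Definition head_erased (G' : ctx) (t : term) : Prop :=
  exists y, head_var t = Some y /\ lookup y G' = None.

Lemma head_erased_dec G' t : {head_erased G' t} + {~ head_erased G' t}.
Proof.
  unfold head_erased. destruct (head_var t) as [y|].
  - destruct (lookup y G') eqn:E.
    + right. intros (z & Hz & Hl). injection Hz as <-. congruence.
    + left. eauto.
  - right. intros (z & Hz & _). discriminate.
Qed.

Lemma head_erased_lift_ctx G' t : head_erased (lift_ctx G') t <-> head_erased G' t.
Proof.
  unfold head_erased. split; intros (y & Hy & Hl); exists y; split; auto;
    rewrite lookup_lift_ctx in *; destruct (lookup y G'); simpl in *; congruence.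
Qed.

(* The clause on abstractions keeps [App u' v'] free of redexes: [u'] can only
   be a stub when [App u v] is replaced by a stub itself. *)
Definition translates (G' : ctx) (t : term) (T : ty) (t' : term) : Prop :=
  typ G' t' T /\ normal t' /\
  (is_lam t' -> is_lam t \/ head_erased G' t) /\
  (forall y, free_in y t -> lookup y G' = None -> free_in a t').

Lemma translates_stub G G' t T :
  erases G G' -> typ G t T -> head_erased G' t -> translates G' t T (stub a T).
Proof.
  intros [Ha HG] Ht He.
  assert (HT : proper T /\ ends_with_const k T).
  { destruct He as (y & Hy & Hl).
    assert (Hya : y <> a) by congruence.
    destruct (HG y Hya) as [E | [_ (A & HyA & HpA & HkA)]].
    { exfalso; apply (typ_head_var_bound G t T y Ht Hy); congruence. }
    exact (typ_head_var_ends_with_const k G t T y A Ht Hy HyA HpA HkA). }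
  destruct HT as [HpT HkT].
  split; [eapply typ_stub; eassumption|].
  split; [apply stub_normal|].
  split; [right; assumption|].
  intros; apply free_in_stub.
Qed.

Lemma translates_lam G' x B t C t' :
  x <> a -> proper B -> translates ((x, B) :: G') t C t' ->
  translates G' (Lam x t) (Arrow B C) (Lam x t').
Proof.
  intros Hxa HB (Ht' & Hn' & _ & Hfv).
  split; [apply T_abs; assumption|]. split; [exact Hn'|]. split; [left; exact I|].
  intros y [Hyx Hy] Hl. split; [congruence|].
  apply (Hfv y Hy). simpl.
  replace (y =? x) with false by (symmetry; apply Nat.eqb_neq; auto).
  assumption.
Qed.

Lemma translates_app G' u v B C u' v' :
  ~ is_lam u -> ~ head_erased G' (App u v) ->
  translates G' u (Arrow B C) u' -> translates G' v B v' ->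
  translates G' (App u v) C (App u' v').
Proof.
  intros Hlu Hne (Hu' & Hnu' & Hlu' & Hfu) (Hv' & Hnv' & _ & Hfv).
  split; [eapply T_app; eassumption|]. split.
  - apply normal_app. split; [|split; assumption].
    intros Hl. destruct (Hlu' Hl) as [|He]; [contradiction|].
    apply Hne; exact He.
  - split; [intros []|].
    intros y [Hy|Hy] Hl; [left|right]; eauto.
Qed.

Lemma translates_gen G' t A t' :
  occurs 0 A -> translates (lift_ctx G') t A t' -> translates G' t (Defs.Forall A) t'.
Proof.
  intros Hocc (Ht' & Hn' & Hl' & Hfv).
  split; [apply T_gen; assumption|]. split; [exact Hn'|]. split.
  - intros Hl. destruct (Hl' Hl) as [|He]; [left; assumption|].
    right; apply head_erased_lift_ctx; assumption.
  - intros y Hy Hl. apply (Hfv y Hy). rewrite lookup_lift_ctx, Hl. reflexivity.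
Qed.

Lemma translates_inst G' t A C t' :
  proper C -> translates G' t (Defs.Forall A) t' -> translates G' t (subst 0 C A) t'.
Proof. intros HC (Ht' & Hrest). split; [apply T_inst; assumption|exact Hrest]. Qed.

Lemma translate G t T :
  typ G t T -> forall G', erases G G' -> normal t -> absent a t ->
  exists t', translates G' t T t'.
Proof.
  intros Ht; induction Ht as [G x A Hx | G x B t C HB Ht IH
                             | G u v B C Hu IHu Hv IHv | G t A Hocc Ht IH
                             | G t A C HC Ht IH];
    intros G' HGG' Hn Ha;
    [ destruct (head_erased_dec G' (Var x)) as [He|Hne] | simpl in Hn, Ha
    | destruct (head_erased_dec G' (App u v)) as [He|Hne]
    | destruct (head_erased_dec G' t) as [He|Hne]
    | destruct (head_erased_dec G' t) as [He|Hne] ];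
    try solve [eexists; apply (translates_stub G); eauto using typ].
  - assert (Hx' : lookup x G' = Some A).
    { destruct HGG' as [_ HG]. simpl in Ha.
      destruct (HG x Ha) as [E | [E _]]; [congruence|].
      exfalso; apply Hne; exists x; auto. }
    exists (Var x). split; [apply T_ax; assumption|].
    split; [exact I|]. split; [intros []|].
    simpl; intros y -> Hl; congruence.
  - destruct Ha as [Hxa Ha].
    destruct (IH _ (erases_cons G G' x B Hxa HGG') Hn Ha) as [t' Ht'].
    exists (Lam x t'). apply translates_lam; assumption.
  - apply normal_app in Hn as (Hlu & Hnu & Hnv). destruct Ha as [Hau Hav].
    destruct (IHu G' HGG' Hnu Hau) as [u' Hu'].
    destruct (IHv G' HGG' Hnv Hav) as [v' Hv'].
    exists (App u' v'). apply (translates_app G' u v B); assumption.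
  - destruct (IH _ (erases_lift_ctx G G' HGG') Hn Ha) as [t' Ht'].
    exists t'. apply translates_gen; assumption.
  - destruct (IH _ HGG' Hn Ha) as [t' Ht'].
    exists t'. apply translates_inst; assumption.
Qed.

End Translation.

Lemma erases_singleton k a G :
  (forall y A, lookup y G = Some A -> proper A /\ ends_with_const k A) ->
  erases k a G [(a, TConst k)].
Proof.
  intros HG. split; [simpl; rewrite Nat.eqb_refl; reflexivity|].
  intros y Hy. simpl. replace (y =? a) with false by (symmetry; apply Nat.eqb_neq; auto).
  destruct (lookup y G) as [A|] eqn:E; [right|left; reflexivity].
  split; [reflexivity|]. exists A. split; [reflexivity|]. exact (HG y A E).
Qed.

Lemma lookup_combine_In y xs As A : lookup y (combine xs As) = Some A -> In A As.
Proof.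
  revert As; induction xs as [|x xs IH]; intros [|B As]; simpl; try discriminate.
  destruct (y =? x); [intros E; injection E as ->; left; reflexivity|].
  intros E; right; exact (IH As E).
Qed.

Fixpoint vars (t : term) : list nat :=
  match t with
  | Var y => [y]
  | Lam x u => x :: vars u
  | App u v => vars u ++ vars v
  end.

Lemma absent_of_vars_lt a t : (forall y, In y (vars t) -> y < a) -> absent a t.
Proof.
  induction t as [y|x u IH|u IHu v IHv]; simpl; intros H.
  - specialize (H y (or_introl eq_refl)). lia.
  - split; [specialize (H x (or_introl eq_refl)); lia|]. auto.
  - split; [apply IHu|apply IHv]; intros y Hy; apply H, in_or_app; auto.
Qed.

Lemma exists_strict_upper_bound (l : list nat) : exists a, forall y, In y l -> y < a.
Proof.
  induction l as [|x l [b Hb]]; [exists 0; intros _ []|].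
  exists (S (max x b)). intros y [<-|Hy]; [lia|]. specialize (Hb y Hy). lia.
Qed.

Theorem theorem2p1p1 (S : ty) :
  closed_ty S -> proper S -> ~ contains_O S ->
  (output_type S <->
   forall (t : term) (xs : list nat) (As : list ty),
     NoDup xs -> length xs = length As ->
     (forall A, In A As -> proper A /\ ends_with_O A) ->
     normal t ->
     typ (combine xs As) t S ->
     forall x, In x xs -> ~ free_in x t).
Proof.
  intros Hc Hp HO. split.
  - intros (_ & _ & _ & Hout) t xs As _ _ HAs Hn Ht x Hx Hfree.
    destruct (exists_strict_upper_bound (vars t ++ xs)) as [a Ha].
    assert (Hxa : x <> a) by (enough (x < a) by lia; apply Ha, in_or_app; auto).
    assert (HGG' : erases 0 a (combine xs As) [(a, O)]).
    { apply erases_singleton. intros y A E. apply HAs, (lookup_combine_In y xs As A E). }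
    assert (Hat : absent a t).
    { apply absent_of_vars_lt. intros y Hy. apply Ha, in_or_app; auto. }
    destruct (translate 0 a _ _ _ Ht _ HGG' Hn Hat) as [t' (Ht' & Hn' & _ & Hfv)].
    apply (Hout t' a Hn' Ht'), (Hfv x Hfree). simpl.
    replace (x =? a) with false by (symmetry; apply Nat.eqb_neq; assumption).
    reflexivity.
  - intros H. split; [assumption|split; [assumption|split; [assumption|]]].
    intros t alpha Hn Ht.
    apply (H t [alpha] [O]); simpl; auto.
    + constructor; [intros []|constructor].
    + intros A [<-|[]]. split; [exact I|constructor].
Qed.
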